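(* Let $\epsilon > 0$, $M \geq 1$, and let $I,J \subset \mathbb{R}$ be intervals with $|I| > 2M^{2}\sqrt{|J|} + 4M\epsilon$. If $F \colon Q := I \times J \to \mathbb{W}$ is a horizontal $(M,\epsilon)$-quasi-isometric embedding, then the induced map $f \colon (J,\|\cdot\|) \to (\mathbb{R},\|\cdot\|)$, $f(t) := \pi_{2}(F(y,t))$ (for any $y \in I$), is an $(M,2\epsilon)$-quasi-isometric embedding.
   Context: $\mathbb{W}$ is $\mathbb{R}^{2}$ with the metric $d_{\mathrm{par}}((y,t),(\xi,\tau)) = \max\{|y-\xi|,|t-\tau|^{1/2}\}$; $\pi_{1}(y,t) = y$, $\pi_{2}(y,t) = t$; horizontal lines in $\mathbb{W}$ are the sets $\mathbb{R} \times \{t\}$. $\|x-y\| := \sqrt{|x-y|}$ denotes the square root metric on $\mathbb{R}$. A map $F \colon (X,d) \to (Y,d')$ is an $(M,\epsilon)$-quasi-isometric embedding if $M^{-1}d(x,y) - \epsilon \leq d'(F(x),F(y)) \leq Md(x,y) + \epsilon$ for all $x,y$. For a rectangle $Q = I \times J$, a map $F \colon Q \to \mathbb{W}$ is a horizontal $(M,\epsilon)$-quasi-isometric embedding if it is an $(M,\epsilon)$-quasi-isometric embedding with respect to $d_{\mathrm{par}}$ and for every $t \in J$ there is a horizontal line $\ell_{t} \subset \mathbb{W}$ with $F(I \times \{t\}) \subset \ell_{t}$ (so $f$ is well defined). *)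

From Stdlib Require Import Reals Lra.
From Coquelicot Require Import Coquelicot.
Open Scope R_scope.

Definition W := (R * R)%type.
Definition d_par (p q : W) : R :=
  Rmax (Rabs (fst p - fst q)) (sqrt (Rabs (snd p - snd q))).
Definition pi1 (p : W) : R := fst p.
Definition pi2 (p : W) : R := snd p.

Definition sqrt_dist (x y : R) : R := sqrt (Rabs (x - y)).

Definition is_interval (S : R -> Prop) : Prop :=
  forall x y z, S x -> S z -> x <= y -> y <= z -> S y.

Definition ilength (S : R -> Prop) : Rbar :=
  Lub_Rbar (fun d => exists x y, S x /\ S y /\ d = Rabs (x - y)).

Definition qi_embedding {X Y : Type} (D : X -> Prop) (d : X -> X -> R)
  (d' : Y -> Y -> R) (F : X -> Y) (M eps : R) : Prop :=
  forall x y, D x -> D y ->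
    / M * d x y - eps <= d' (F x) (F y) /\ d' (F x) (F y) <= M * d x y + eps.

Definition rect (I J : R -> Prop) (p : R * R) : Prop := I (fst p) /\ J (snd p).

Definition horizontal_line (l : W -> Prop) : Prop :=
  exists t, forall p, l p <-> pi2 p = t.

Definition horizontal_qi_embedding (I J : R -> Prop) (F : R * R -> W)
  (M eps : R) : Prop :=
  qi_embedding (rect I J) d_par d_par F M eps /\
  forall t, J t -> exists l, horizontal_line l /\
    forall y, I y -> l (F (y, t)).

(* For the lower bound, suppose f brings s and t
   much closer than sqrt|s - t| / M.  Then for every y the first coordinate of F(y,t)
   stays more than eps away from that of F(y0,s), and symmetrically.  A coarsely
   Lipschitz function on an interval cannot jump over a gap of width 2 eps, so both rows
   y |-> F(y,t), y |-> F(y,s) stay on the side they occupy at y0; adding the two lower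
   QI bounds then gives |y - y0| <= M (M sqrt|s - t| + 2 eps) for all y in I, which
   contradicts the assumed length of I. *)
From Stdlib Require Import Reals Lra.
From Coquelicot Require Import Coquelicot.
Open Scope R_scope.

Lemma Rmax_ge_l (a b c : R) : c <= Rmax a b -> b < c -> c <= a.
Proof. unfold Rmax; destruct Rle_dec; lra. Qed.

Lemma sqrt_dist_sym (x y : R) : sqrt_dist x y = sqrt_dist y x.
Proof. unfold sqrt_dist; rewrite Rabs_minus_sym; reflexivity. Qed.

Lemma d_par_pi (p q : W) :
  d_par p q = Rmax (Rabs (pi1 p - pi1 q)) (sqrt_dist (pi2 p) (pi2 q)).
Proof. reflexivity. Qed.

Lemma d_par_same_pi2 (p q : W) : pi2 p = pi2 q -> d_par p q = Rabs (pi1 p - pi1 q).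
Proof.
  intros e; rewrite d_par_pi; unfold sqrt_dist; rewrite e, Rminus_diag, Rabs_R0, sqrt_0.
  apply Rmax_left, Rabs_pos.
Qed.

Lemma d_par_same_pi1 (p q : W) : pi1 p = pi1 q -> d_par p q = sqrt_dist (pi2 p) (pi2 q).
Proof.
  intros e; rewrite d_par_pi, e, Rminus_diag, Rabs_R0.
  apply Rmax_right, sqrt_pos.
Qed.

Lemma Rabs_le_ilength (J : R -> Prop) (L s t : R) :
  ilength J = Finite L -> J s -> J t -> Rabs (s - t) <= L.
Proof.
  intros hL hs ht.
  destruct (Lub_Rbar_correct (fun d => exists x y, J x /\ J y /\ d = Rabs (x - y)))
    as [ub _].
  fold (ilength J) in ub; rewrite hL in ub.
  apply (ub (Rabs (s - t))); exists s, t; auto.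
Qed.

Lemma ilength_le_twice_radius (I : R -> Prop) (y0 C : R) :
  (forall y, I y -> Rabs (y - y0) <= C) -> Rbar_le (ilength I) (Finite (2 * C)).
Proof.
  intros hC.
  destruct (Lub_Rbar_correct (fun d => exists x y, I x /\ I y /\ d = Rabs (x - y)))
    as [_ lub].
  apply lub; intros d [x [y [hx [hy ->]]]]; simpl.
  pose proof (hC x hx); pose proof (hC y hy).
  pose proof (Rabs_triang (x - y0) (y0 - y)) as tri.
  replace (x - y0 + (y0 - y)) with (x - y) in tri by ring.
  rewrite (Rabs_minus_sym y0 y) in tri; lra.
Qed.

Lemma is_interval_step_invariant (I P : R -> Prop) (eta : R) :
  is_interval I -> 0 < eta ->
  (forall x y, I x -> I y -> Rabs (x - y) <= eta -> P x -> P y) ->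
  forall a b, I a -> I b -> (P a <-> P b).
Proof.
  intros hI heta hstep.
  assert (up : forall a b, I a -> I b -> a <= b -> (P a <-> P b)).
  { intros a b ha hb hab.
    set (p := fun k : nat => Rmin b (a + INR k * eta)).
    assert (hpI : forall k, I (p k)).
    { intros k; apply (hI a _ b ha hb); [|apply Rmin_l].
      pose proof (pos_INR k); apply Rmin_glb; nra. }
    assert (hpstep : forall k, Rabs (p k - p (S k)) <= eta).
    { intros k; unfold p; rewrite S_INR.
      unfold Rmin; repeat destruct Rle_dec; unfold Rabs; destruct Rcase_abs; lra. }
    assert (hpP : forall k, P a <-> P (p k)).
    { induction k as [|k IH].
      - unfold p; simpl; rewrite Rmult_0_l, Rplus_0_r, Rmin_right by lra; tauto.
      - rewrite IH; split; apply hstep; auto.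
        rewrite Rabs_minus_sym; apply hpstep. }
    destruct (INR_archimed eta (b - a) heta) as [N hN].
    assert (hpN : p N = b) by (unfold p; apply Rmin_left; lra).
    rewrite <- hpN; apply hpP. }
  intros a b ha hb; destruct (Rle_or_lt a b).
  - apply up; auto.
  - symmetry; apply up; auto; lra.
Qed.

Lemma gap_same_side (p q v eps : R) :
  eps < Rabs (p - v) -> eps < Rabs (q - v) -> Rabs (p - q) <= 2 * eps ->
  v < p -> v < q.
Proof. unfold Rabs; repeat destruct Rcase_abs; lra. Qed.

Lemma coarse_lipschitz_same_side (I : R -> Prop) (g : R -> R) (M eps v : R) :
  is_interval I -> 0 < eps -> 0 < M ->
  (forall y y', I y -> I y' -> Rabs (g y - g y') <= M * Rabs (y - y') + eps) ->
  (forall y, I y -> eps < Rabs (g y - v)) ->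
  forall a b, I a -> I b -> (v < g a <-> v < g b).
Proof.
  intros hI heps hM hlip hgap.
  apply (is_interval_step_invariant I (fun y => v < g y) (eps / M) hI).
  { apply Rdiv_lt_0_compat; lra. }
  intros x y hx hy hxy.
  apply (gap_same_side _ _ _ eps); auto.
  assert (hstep : M * Rabs (x - y) <= M * (eps / M)) by (apply Rmult_le_compat_l; lra).
  replace (M * (eps / M)) with eps in hstep by (field; lra).
  pose proof (hlip x y hx hy); lra.
Qed.

Lemma gap_le_of_sides (v w a b c d : R) :
  v <> w -> (v < w <-> v < a) -> (w < v <-> w < b) ->
  c <= Rabs (a - v) -> c <= Rabs (b - w) ->
  Rabs (b - a) <= d -> Rabs (v - w) <= d -> c <= d.
Proof.
  intros hvw ha hb; destruct (Rtotal_order v w) as [lt | [eq | gt]]; [| contradiction |].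
  - assert (v < a) by tauto; assert (~ w < b) by (intros hwb; apply hb in hwb; lra).
    unfold Rabs; repeat destruct Rcase_abs; lra.
  - assert (w < b) by tauto; assert (~ v < a) by (intros hva; apply ha in hva; lra).
    unfold Rabs; repeat destruct Rcase_abs; lra.
Qed.

Section HorizontalEmbedding.

Variables (eps M : R) (I J : R -> Prop) (F : R * R -> W).
Hypotheses (heps : 0 < eps) (hM : 0 < M) (hI : is_interval I)
  (hqi : qi_embedding (rect I J) d_par d_par F M eps)
  (hhor : forall t, J t -> exists l, horizontal_line l /\ forall y, I y -> l (F (y, t))).

Lemma pi2_horizontal (y y' t : R) :
  I y -> I y' -> J t -> pi2 (F (y, t)) = pi2 (F (y', t)).
Proof.
  intros hy hy' ht; destruct (hhor t ht) as [l [[c hc] hl]].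
  rewrite (proj1 (hc _) (hl y hy)), (proj1 (hc _) (hl y' hy')); reflexivity.
Qed.

Lemma pi1_coarse_lipschitz (t : R) : J t -> forall y y', I y -> I y' ->
  Rabs (pi1 (F (y, t)) - pi1 (F (y', t))) <= M * Rabs (y - y') + eps.
Proof.
  intros ht y y' hy hy'.
  destruct (hqi (y, t) (y', t)) as [_ hup]; try (split; assumption).
  rewrite 2!d_par_same_pi2 in hup by (try apply pi2_horizontal; auto).
  exact hup.
Qed.

Lemma d_par_vertical_le (y s t : R) : I y -> J s -> J t ->
  d_par (F (y, s)) (F (y, t)) <= M * sqrt_dist s t + eps.
Proof.
  intros hy hs ht.
  destruct (hqi (y, s) (y, t)) as [_ hup]; try (split; assumption).
  rewrite (d_par_same_pi1 (y, s)) in hup by reflexivity; exact hup.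
Qed.

Lemma pi1_gap (y0 y s t : R) : I y0 -> I y -> J s -> J t ->
  sqrt_dist (pi2 (F (y0, s))) (pi2 (F (y0, t))) < / M * sqrt_dist s t - 2 * eps ->
  / M * Rabs (y - y0) - eps <= Rabs (pi1 (F (y, t)) - pi1 (F (y0, s))) /\
  eps < Rabs (pi1 (F (y, t)) - pi1 (F (y0, s))).
Proof.
  intros hy0 hy hs ht hcol.
  destruct (hqi (y, t) (y0, s)) as [hlow _]; try (split; assumption).
  rewrite (d_par_pi (F (y, t))), (pi2_horizontal y y0 t), sqrt_dist_sym in hlow by auto.
  change (d_par (y, t) (y0, s)) with (Rmax (Rabs (y - y0)) (sqrt_dist t s)) in hlow.
  rewrite (sqrt_dist_sym t s) in hlow.
  assert (hiM : 0 < / M) by (apply Rinv_0_lt_compat; lra).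
  assert (hly : / M * Rabs (y - y0) <= / M * Rmax (Rabs (y - y0)) (sqrt_dist s t))
    by (apply Rmult_le_compat_l; [lra | apply Rmax_l]).
  assert (hlX : / M * sqrt_dist s t <= / M * Rmax (Rabs (y - y0)) (sqrt_dist s t))
    by (apply Rmult_le_compat_l; [lra | apply Rmax_r]).
  assert (hD0 : 0 <= sqrt_dist (pi2 (F (y0, s))) (pi2 (F (y0, t)))) by apply sqrt_pos.
  apply Rmax_ge_l in hlow; [split |]; lra.
Qed.

Lemma collapse_radius_bound (y0 s t : R) : I y0 -> J s -> J t ->
  sqrt_dist (pi2 (F (y0, s))) (pi2 (F (y0, t))) < / M * sqrt_dist s t - 2 * eps ->
  forall y, I y -> Rabs (y - y0) <= M * (M * sqrt_dist s t + 2 * eps).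
Proof.
  intros hy0 hs ht hcol y hy.
  assert (hcol' : sqrt_dist (pi2 (F (y0, t))) (pi2 (F (y0, s)))
                  < / M * sqrt_dist t s - 2 * eps)
    by (rewrite sqrt_dist_sym, (sqrt_dist_sym t s); exact hcol).
  destruct (pi1_gap y0 y s t hy0 hy hs ht hcol) as [hlow_t _].
  destruct (pi1_gap y0 y t s hy0 hy ht hs hcol') as [hlow_s _].
  destruct (pi1_gap y0 y0 s t hy0 hy0 hs ht hcol) as [_ hsep].
  assert (hside_t : pi1 (F (y0, s)) < pi1 (F (y0, t)) <-> pi1 (F (y0, s)) < pi1 (F (y, t))).
  { apply (coarse_lipschitz_same_side I (fun y => pi1 (F (y, t))) M eps); auto.
    - exact (pi1_coarse_lipschitz t ht).
    - intros y' hy'; exact (proj2 (pi1_gap y0 y' s t hy0 hy' hs ht hcol)). }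
  assert (hside_s : pi1 (F (y0, t)) < pi1 (F (y0, s)) <-> pi1 (F (y0, t)) < pi1 (F (y, s))).
  { apply (coarse_lipschitz_same_side I (fun y => pi1 (F (y, s))) M eps); auto.
    - exact (pi1_coarse_lipschitz s hs).
    - intros y' hy'; exact (proj2 (pi1_gap y0 y' t s hy0 hy' ht hs hcol')). }
  assert (hclose : forall y', I y' ->
            Rabs (pi1 (F (y', s)) - pi1 (F (y', t))) <= M * sqrt_dist s t + eps).
  { intros y' hy'; eapply Rle_trans; [apply Rmax_l | apply d_par_vertical_le; auto]. }
  assert (hbound : / M * Rabs (y - y0) - eps <= M * sqrt_dist s t + eps).
  { apply (gap_le_of_sides (pi1 (F (y0, s))) (pi1 (F (y0, t))) (pi1 (F (y, t)))
      (pi1 (F (y, s)))); auto.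
    intros e; rewrite e, Rminus_diag, Rabs_R0 in hsep; lra. }
  apply Rmult_le_compat_l with (r := M) in hbound; [| lra].
  rewrite Rmult_minus_distr_l, <- Rmult_assoc, Rinv_r, Rmult_1_l in hbound by lra.
  nra.
Qed.

End HorizontalEmbedding.

Theorem lemma3p13 (eps M : R) (I J : R -> Prop) (LJ : R) (F : R * R -> W) :
  0 < eps -> 1 <= M ->
  is_interval I -> is_interval J ->
  ilength J = Finite LJ ->
  Rbar_lt (Finite (2 * M ^ 2 * sqrt LJ + 4 * M * eps)) (ilength I) ->
  horizontal_qi_embedding I J F M eps ->
  forall y0, I y0 ->
    qi_embedding J sqrt_dist sqrt_dist (fun t => pi2 (F (y0, t))) M (2 * eps).
Proof.
  intros heps hM hI _ hLJ hlen [hqi hhor] y0 hy0 s t hs ht.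
  assert (hM0 : 0 < M) by lra.
  split.
  - destruct (Rle_or_lt (/ M * sqrt_dist s t - 2 * eps)
                        (sqrt_dist (pi2 (F (y0, s))) (pi2 (F (y0, t))))) as [ok | hcol];
      [exact ok | exfalso].
    pose proof (collapse_radius_bound eps M I J F heps hM0 hI hqi hhor y0 s t hy0 hs ht hcol)
      as hrad.
    pose proof (ilength_le_twice_radius I y0 _ hrad) as hIlen.
    assert (hX : sqrt_dist s t <= sqrt LJ)
      by (apply sqrt_le_1_alt, (Rabs_le_ilength J); auto).
    assert (hMX : M * M * sqrt_dist s t <= M * M * sqrt LJ)
      by (apply Rmult_le_compat_l; nra).
    destruct (ilength I) as [L | |]; simpl in hlen, hIlen; try contradiction.
    nra.
  - pose proof (d_par_vertical_le eps M I J F hqi y0 s t hy0 hs ht) as hup.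
    rewrite d_par_pi in hup.
    pose proof (Rmax_r (Rabs (pi1 (F (y0, s)) - pi1 (F (y0, t))))
                       (sqrt_dist (pi2 (F (y0, s))) (pi2 (F (y0, t))))).
    lra.
Qed.
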